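(* Let $\mathcal{A}$ and $\mathcal{B}$ be equality languages, $c\in\mathbb{Z}_+$ and $k\in\mathbb{N}$. If $\neq_{c+1}\notin\langle\mathcal{A}\cup\mathcal{B}\rangle_{\leq k}$, then every satisfiable instance of $\mathrm{CSP}_{\le k}(\mathcal{A},\mathcal{B})$ has a solution whose range is contained in $[c]=\{1,\dots,c\}$.
   Context: An equality language is a structure with domain $\mathbb{N}$ and finite signature whose relations are first-order definable in $(\mathbb{N};=)$. $\neq_r=\{(t_1,\dots,t_r)\in\mathbb{N}^r:|\{t_1,\dots,t_r\}|=r\}$. $\langle\mathcal{A}\cup\mathcal{B}\rangle_{\leq k}$ is the set of relations pp-definable over $\mathcal{A}\cup\mathcal{B}$ (formulas $\exists\bar y\,\bigwedge_i R_i(\mathbf{x}_i)$ with $R_i$ relations of $\mathcal{A}\cup\mathcal{B}$ or equality) using at most $k$ atoms with relations from $\mathcal{B}$. $\mathrm{CSP}_{\le k}(\mathcal{A},\mathcal{B})$: given an instance $(V,C_1\cup C_2)$ with $C_1$ over $\mathcal{A}$, $C_2$ over $\mathcal{B}$, $|C_2|\le k$, decide satisfiability. *)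

From Stdlib Require List.
From mathcomp Require Import all_boot.
Set Implicit Arguments. Unset Strict Implicit. Unset Printing Implicit Defensive.

Record erel := ERel { ar : nat; rholds : ('I_ar -> nat) -> Prop }.

Inductive fo :=
| FEq : nat -> nat -> fo
| FNot : fo -> fo
| FAnd : fo -> fo -> fo
| FEx : nat -> fo -> fo.

Definition upd (v : nat -> nat) (i a : nat) : nat -> nat :=
  fun j => if j == i then a else v j.

Fixpoint fo_eval (v : nat -> nat) (f : fo) : Prop :=
  match f with
  | FEq i j => v i = v j
  | FNot g => ~ fo_eval v g
  | FAnd g h => fo_eval v g /\ fo_eval v h
  | FEx i g => exists a, fo_eval (upd v i a) g
  end.

Definition fo_definable (R : erel) : Prop :=
  exists f : fo, forall v : nat -> nat,
    @rholds R (fun j : 'I_(ar R) => v (nat_of_ord j)) <-> fo_eval v f.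

Definition equality_language (L : seq erel) : Prop :=
  forall R, List.In R L -> fo_definable R.

Record constraint (L : seq erel) (V : Type) := Constr {
  c_rel : erel;
  c_in : List.In c_rel L;
  c_args : 'I_(ar c_rel) -> V }.

Definition sat_constr (L : seq erel) (V : Type) (s : V -> nat)
  (C : constraint L V) : Prop :=
  @rholds (c_rel C) (fun j => s (@c_args L V C j)).

Definition neq_rel (r : nat) : erel := @ERel r (fun t => injective t).

(* <A u B>_{<= k}: pp-definable over A u B (with equality), using at most
   k atoms whose relation comes from B.  Variables: the r free ones (inl)
   and m existentially quantified ones (inr). *)
Definition pp_def_le (A B : seq erel) (k : nat) (S : erel) : Prop :=
  exists (m : nat)
         (EQs : seq (('I_(ar S) + 'I_m) * ('I_(ar S) + 'I_m)))
         (As : seq (constraint A ('I_(ar S) + 'I_m)))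
         (Bs : seq (constraint B ('I_(ar S) + 'I_m))),
    size Bs <= k /\
    forall t : 'I_(ar S) -> nat,
      @rholds S t <->
      exists y : 'I_m -> nat,
        let val := fun z => match z with inl i => t i | inr j => y j end in
        (forall e, List.In e EQs -> val e.1 = val e.2) /\
        (forall C, List.In C As -> sat_constr val C) /\
        (forall C, List.In C Bs -> sat_constr val C).

Definition solution (A B : seq erel) (n : nat)
  (C1 : seq (constraint A 'I_n)) (C2 : seq (constraint B 'I_n))
  (s : 'I_n -> nat) : Prop :=
  (forall C, List.In C C1 -> sat_constr s C) /\
  (forall C, List.In C C2 -> sat_constr s C).

From mathcomp Require Import all_boot.
From Stdlib Require Import Classical FunctionalExtensionality.

Set Implicit Arguments.
Unset Strict Implicit.
Unset Printing Implicit Defensive.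

(* Relations first-order definable in (N; =) are invariant under permutations
   of N, so solutions may be renamed freely.  Take a solution s with the fewest
   distinct values, say d.  If d <= c, rename its values to 1, ..., d.
   Otherwise neq_(c+1) is pp-definable: pin the free variables t_0, ..., t_c to
   representatives of c+1 distinct value classes of s, and force the instance
   variables to be constant on the classes of s.  An injective t is realised by
   renaming s; a non-injective one would give a solution with fewer than d
   values. *)

Lemma InP (T : eqType) (x : T) (s : seq T) : reflect (List.In x s) (x \in s).
Proof.
elim: s => [|y s IHs]; first by constructor.
rewrite in_cons; apply: (iffP orP) => [[/eqP->|/IHs]|[->|/IHs]]; by [left|right].
Qed.

Definition transp (T : eqType) (a b x : T) := if x == a then b else if x == b then a else x.

Lemma transpK (T : eqType) (a b : T) : involutive (transp a b).
Proof.
move=> x; rewrite /transp.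
have [-> | xa] := eqVneq x a; first by case: eqVneq => [->|]; rewrite ?eqxx.
have [-> | xb] := eqVneq x b; first by rewrite eqxx.
by rewrite (negPf xa) (negPf xb).
Qed.

Lemma uniq_map_bij (T : eqType) (a b : seq T) :
  uniq a -> uniq b -> size a = size b -> exists2 pi, bijective pi & map pi a = b.
Proof.
elim: a b => [|x a IHa] [|y b] //=; first by exists id => //; exists id.
move=> /andP[xNa uniq_a] /andP[yNb uniq_b] [size_ab].
have [pi bij_pi pi_ab] := IHa b uniq_a uniq_b size_ab.
exists (transp (pi x) y \o pi); first exact/bij_comp/bij_pi/inv_bij/transpK.
rewrite /= {1}/transp eqxx; congr (_ :: _); rewrite -[RHS]pi_ab.
apply/eq_in_map => z za /=; rewrite /transp.
have -> : (pi z == pi x) = false.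
  by apply/negbTE; apply: contraNneq xNa => /(bij_inj bij_pi) <-.
have -> // : (pi z == y) = false.
by apply/negbTE; apply: contraNneq yNb => <-; rewrite -pi_ab map_f.
Qed.

Lemma ex_argminn (T : Type) (P : T -> Prop) (m : T -> nat) :
  (exists x, P x) -> exists2 x, P x & forall y, P y -> m x <= m y.
Proof.
case=> x; move: {2}(m x) (erefl (m x)) => d; elim/ltn_ind: d x => d IHd x mx Px.
have [[y Py lt_yx] | no_less] := classic (exists2 y, P y & m y < m x).
  by apply: (IHd (m y) _ y erefl Py); rewrite -mx.
by exists x => // y Py; rewrite leqNgt; apply/negP => lt; apply: no_less; exists y.
Qed.

Section Invariance.

Variables (pi : nat -> nat) (bij_pi : bijective pi).

Lemma upd_comp (v : nat -> nat) i a : upd (pi \o v) i (pi a) = pi \o upd v i a.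
Proof. by apply: functional_extensionality => j; rewrite /upd /=; case: (j == i). Qed.

Lemma fo_eval_bij f v : fo_eval v f <-> fo_eval (pi \o v) f.
Proof.
have [rho piK rhoK] := bij_pi.
elim: f v => [i j | g IHg | g IHg h IHh | i g IHg] v /=.
- by split=> [-> | /(can_inj piK)].
- by rewrite IHg.
- by rewrite IHg IHh.
- split=> [[a] | [a]].
    by rewrite IHg -upd_comp; exists (pi a).
  by rewrite -[a]rhoK upd_comp -IHg; exists (rho a).
Qed.

Lemma fo_definable_bij R t : fo_definable R -> rholds t -> @rholds R (pi \o t).
Proof.
case=> f defR Rt.
pose v k := if insub k is Some j then t j else 0.
have vE : (fun j : 'I_(ar R) => v j) = t.
  by apply: functional_extensionality => j; rewrite /v valK.
have -> : pi \o t = (fun j : 'I_(ar R) => (pi \o v) j) by rewrite -vE.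
by apply/(defR (pi \o v))/(fo_eval_bij f v)/(defR v); rewrite vE.
Qed.

Definition sat_all L V (s : V -> nat) (Cs : seq (constraint L V)) :=
  forall C, List.In C Cs -> sat_constr s C.

Lemma sat_all_bij L V (s : V -> nat) (Cs : seq (constraint L V)) :
  equality_language L -> sat_all s Cs -> sat_all (pi \o s) Cs.
Proof. by move=> eqL sat_s C inC; apply: fo_definable_bij (eqL _ (c_in C)) (sat_s C inC). Qed.

Lemma solution_bij A B n (C1 : seq (constraint A 'I_n)) (C2 : seq (constraint B 'I_n)) s :
  equality_language A -> equality_language B ->
  solution C1 C2 s -> solution C1 C2 (pi \o s).
Proof. by move=> eqA eqB [sat1 sat2]; split; apply: sat_all_bij. Qed.

End Invariance.

Definition mapc L V W (f : V -> W) (C : constraint L V) : constraint L W :=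
  @Constr L W (c_rel C) (c_in C) (f \o @c_args L V C).

Lemma sat_all_mapc L V W (f : V -> W) (v : W -> nat) (Cs : seq (constraint L V)) :
  sat_all v (map (mapc f) Cs) <-> sat_all (v \o f) Cs.
Proof.
split=> [sat_v C inC | sat_vf C /List.in_map_iff [C' [<- inC']]].
  exact: (sat_v _ (List.in_map (mapc f) _ _ inC)).
exact: sat_vf.
Qed.

Definition sumf (T U V : Type) (f : T -> V) (g : U -> V) (z : T + U) : V :=
  match z with inl x => f x | inr y => g y end.

Definition nvals n (s : 'I_n -> nat) := size (undup (codom s)).

Lemma solution_range_nvals A B n (C1 : seq (constraint A 'I_n))
    (C2 : seq (constraint B 'I_n)) s :
  equality_language A -> equality_language B -> solution C1 C2 s ->
  exists s', solution C1 C2 s' /\ forall x, 1 <= s' x <= nvals s.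
Proof.
move=> eqA eqB sol_s.
have [pi bij_pi pi_vals] := uniq_map_bij (undup_uniq (codom s)) (iota_uniq 1 (nvals s))
  (esym (size_iota _ _)).
exists (pi \o s); split; first exact: solution_bij.
move=> x; have sx : s x \in undup (codom s) by rewrite mem_undup codom_f.
have ix : index (s x) (undup (codom s)) < nvals s by rewrite index_mem.
by rewrite /= -(nth_index 0 sx) -(nth_map 0 0 pi) ?index_mem // pi_vals nth_iota.
Qed.

Section MinimalSolution.

Variables (A B : seq erel) (n : nat).
Variables (C1 : seq (constraint A 'I_n)) (C2 : seq (constraint B 'I_n)) (s : 'I_n -> nat).
Hypotheses (eqA : equality_language A) (eqB : equality_language B).
Hypothesis sol_s : solution C1 C2 s.
Hypothesis min_s : forall y, solution C1 C2 y -> nvals s <= nvals y.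
Variables (x0 : 'I_n) (r : nat).
Hypothesis r_le : r <= nvals s.

Let vals := undup (codom s).
Let rep v := odflt x0 [pick x | s x == v].

Lemma s_rep v : v \in codom s -> s (rep v) = v.
Proof.
move=> /codomP[x ->]; rewrite /rep; case: pickP => [x' /eqP // | noneq].
by have := noneq x; rewrite eqxx.
Qed.

Lemma s_rep_vals (i : 'I_r) : s (rep (nth 0 vals i)) = nth 0 vals i.
Proof. by apply: s_rep; rewrite -mem_undup mem_nth // (leq_trans (ltn_ord i)). Qed.

Definition class_eqs : seq (('I_r + 'I_n) * ('I_r + 'I_n)) :=
  [seq (inl i, inr (rep (nth 0 vals i))) | i : 'I_r <- enum 'I_r] ++
  [seq (inr x, inr (rep (s x))) | x : 'I_n <- enum 'I_n].

Lemma class_eqsP (t : 'I_r -> nat) (y : 'I_n -> nat) :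
  (forall e, List.In e class_eqs -> sumf t y e.1 = sumf t y e.2) <->
  (forall i, t i = y (rep (nth 0 vals i))) /\ (forall x, y x = y (rep (s x))).
Proof.
split=> [eqs | [tE yE] e /InP]; last first.
  by rewrite mem_cat => /orP[] /mapP[z _ ->]; [apply: tE | apply: yE].
split=> [i | x].
  by apply: (eqs (inl i, inr (rep (nth 0 vals i)))); apply/InP; rewrite mem_cat map_f ?mem_enum.
by apply: (eqs (inr x, inr (rep (s x)))); apply/InP; rewrite mem_cat map_f ?mem_enum ?orbT.
Qed.

Lemma realise_injective (t : 'I_r -> nat) : injective t ->
  exists y, [/\ solution C1 C2 y, forall i, t i = y (rep (nth 0 vals i))
                                & forall x, y x = y (rep (s x))].
Proof.
move=> inj_t.
have [pi bij_pi pi_vals] : exists2 pi, bijective pi & map pi (take r vals) = map t (enum 'I_r).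
  apply: uniq_map_bij; first exact/take_uniq/undup_uniq.
    by rewrite map_inj_uniq ?enum_uniq.
  by rewrite size_takel // size_map size_enum_ord.
exists (pi \o s); split=> [||x]; first exact: solution_bij.
  move=> i /=; rewrite s_rep_vals -(nth_take 0 (ltn_ord i)) -(nth_map 0 0 pi).
    by rewrite pi_vals (nth_map i) ?size_enum_ord // nth_ord_enum.
  by rewrite size_takel.
by rewrite /= s_rep // codom_f.
Qed.

Lemma injective_of_class_solution (t : 'I_r -> nat) y : solution C1 C2 y ->
  (forall i, t i = y (rep (nth 0 vals i))) -> (forall x, y x = y (rep (s x))) ->
  injective t.
Proof.
move=> sol_y tE yE.
pose g v := y (rep v).
have sub : {subset undup (codom y) <= undup (map g vals)}.
  move=> v; rewrite !mem_undup => /codomP[x ->]; rewrite yE.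
  by apply: map_f; rewrite mem_undup codom_f.
have uniq_g : uniq (map g vals).
  apply: contraLR (min_s sol_y); rewrite -ltn_size_undup size_map -ltnNge => lt.
  exact: leq_ltn_trans (uniq_leq_size (undup_uniq _) sub) lt.
move=> i j tij; apply: val_inj => /=; apply/eqP.
have lt_vals (k : 'I_r) : k < size vals by exact: leq_trans (ltn_ord k) r_le.
rewrite -(nth_uniq 0 _ _ uniq_g) ?size_map ?lt_vals // !(nth_map 0) ?lt_vals //.
by rewrite /g -!tE tij.
Qed.

Lemma neq_pp_def_le k : size C2 <= k -> pp_def_le A B k (neq_rel r).
Proof.
move=> le_k.
exists n, class_eqs, (map (mapc inr) C1), (map (mapc inr) C2).
split; first by rewrite size_map.
move=> t; split=> [/realise_injective[y [[sat1 sat2] tE yE]] | [y [eqs [sat1 sat2]]]].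
  by exists y; split; [exact/class_eqsP | split; exact/sat_all_mapc].
have [tE yE] := (class_eqsP t y).1 eqs.
apply: (injective_of_class_solution _ tE yE).
by split; [apply: (sat_all_mapc inr (sumf t y) C1).1 | apply: (sat_all_mapc inr (sumf t y) C2).1].
Qed.

End MinimalSolution.

Lemma neq_pp_def_of_min_solution A B n (C1 : seq (constraint A 'I_n))
    (C2 : seq (constraint B 'I_n)) s c k :
  equality_language A -> equality_language B -> solution C1 C2 s ->
  (forall y, solution C1 C2 y -> nvals s <= nvals y) ->
  c < nvals s -> size C2 <= k -> pp_def_le A B k (neq_rel c.+1).
Proof.
move=> eqA eqB sol_s min_s lt_c.
have n_gt0 : 0 < n.
  rewrite -[n]card_ord -(size_codom s); apply: leq_trans (size_undup _).
  exact: leq_ltn_trans (leq0n c) lt_c.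
exact: (neq_pp_def_le eqA eqB sol_s min_s (Ordinal n_gt0) lt_c).
Qed.

Theorem lemma23 (A B : seq erel) (c k : nat) :
  equality_language A -> equality_language B -> 0 < c ->
  ~ pp_def_le A B k (neq_rel c.+1) ->
  forall (n : nat) (C1 : seq (constraint A 'I_n)) (C2 : seq (constraint B 'I_n)),
    size C2 <= k ->
    (exists s, solution C1 C2 s) ->
    exists s, solution C1 C2 s /\ forall x : 'I_n, 1 <= s x <= c.
Proof.
move=> eqA eqB _ not_def n C1 C2 le_k sat.
have [s sol_s min_s] := ex_argminn (@nvals n) sat.
have le_c : nvals s <= c.
  rewrite leqNgt; apply/negP => lt_c; apply: not_def.
  exact: neq_pp_def_of_min_solution eqA eqB sol_s min_s lt_c le_k.
have [s' [sol_s' range_s']] := solution_range_nvals eqA eqB sol_s.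
exists s'; split=> // x; have /andP[-> le_s'x] := range_s' x.
exact: leq_trans le_s'x le_c.
Qed.
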